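(* Let $\star$ be a Weyl star product on $C^\infty(\mathbb R^N)[[\alpha]]$ satisfying the stability of unity. Then for every $n\ge2$, all indices $i_1,\dots,i_n$ and every $f$, $$\sum_{k=1}^nA\Big(x^{i_k},\ \prod_{l\ne k}x^{i_l},\ f\Big)=0,$$ where $\prod_{l\ne k}x^{i_l}$ is the ordinary product of the coordinate functions $x^{i_l}$ with $l\ne k$.
   Context: Work on $\mathbb R^N$ with real coordinates $x^1,\dots,x^N$. Functions are complex-valued smooth functions on $\mathbb R^N$. A star product is a $\mathbb C[[\alpha]]$-bilinear map on $C^\infty(\mathbb R^N)[[\alpha]]$ (formal power series in the real formal parameter $\alpha$). On functions it is given by $f\star g=fg+\sum_{r\ge1}(i\alpha)^rC_r(f,g)$, where the $C_r$ are bilinear bidifferential operators. The associator is $A(f,g,h)=f\star(g\star h)-(f\star g)\star h$. Definitions: - Weyl star product: for every $n\ge1$, all indices $i_1,\dots,i_n$ and all $f$, $$(x^{i_1}\cdots x^{i_n})\star f=\frac1{n!}\sum_{\sigma\in S_n}x^{i_{\sigma(1)}}\star\big(x^{i_{\sigma(2)}}\star(\cdots\star(x^{i_{\sigma(n)}}\star f)\cdots)\big),$$ where $x^{i_1}\cdots x^{i_n}$ denotes the ordinary product. - Stability of unity: $f\star1=1\star f=f$ for all $f$. *)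

From Stdlib Require Import Reals List Arith.
Import ListNotations.
Open Scope R_scope.

Definition C : Type := (R * R)%type.
Definition C0 : C := (0, 0).
Definition C1 : C := (1, 0).
Definition Ci : C := (0, 1).
Definition Cadd (z w : C) : C := (fst z + fst w, snd z + snd w).
Definition Copp (z : C) : C := (- fst z, - snd z).
Definition Cmul (z w : C) : C :=
  (fst z * fst w - snd z * snd w, fst z * snd w + snd z * fst w).
Definition RtoC (r : R) : C := (r, 0).
Fixpoint Cpow (z : C) (n : nat) : C :=
  match n with O => C1 | S k => Cmul z (Cpow z k) end.

(* finite sum  f 0 + f 1 + ... + f n  (n+1 terms) *)
Fixpoint Csum_upto (n : nat) (f : nat -> C) : C :=
  match n with
  | O => f O
  | S k => Cadd (Csum_upto k f) (f (S k))
  end.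

Definition Idx (N : nat) : Type := {i : nat | (i < N)%nat}.
Definition Pt (N : nat) : Type := Idx N -> R.
Definition upd {N : nat} (x : Pt N) (i : Idx N) (t : R) : Pt N :=
  fun j => if Nat.eq_dec (proj1_sig j) (proj1_sig i) then t else x j.
Definition Fn (N : nat) : Type := Pt N -> C.

Definition is_partial {N : nat} (i : Idx N) (f g : Fn N) : Prop :=
  forall x : Pt N,
    derivable_pt_lim (fun t => fst (f (upd x i t))) (x i) (fst (g x)) /\
    derivable_pt_lim (fun t => snd (f (upd x i t))) (x i) (snd (g x)).

(* D l = iterated partial derivative  d_{l_1} d_{l_2} ... d_{l_k} f *)
Definition deriv_family {N : nat} (f : Fn N) (D : list (Idx N) -> Fn N) : Prop :=
  D [] = f /\ forall (l : list (Idx N)) (i : Idx N), is_partial i (D l) (D (i :: l)).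

Definition smooth {N : nat} (f : Fn N) : Prop := exists D, deriv_family f D.

Definition bidifferential {N : nat} (B : Fn N -> Fn N -> Fn N) : Prop :=
  exists terms : list (list (Idx N) * list (Idx N) * Fn N),
    (forall t, In t terms -> smooth (snd t)) /\
    forall (f g : Fn N) (Df Dg : list (Idx N) -> Fn N),
      deriv_family f Df -> deriv_family g Dg -> forall x : Pt N,
        B f g x =
        fold_right
          (fun t acc => match t with (K, L, c) =>
              Cadd (Cmul (c x) (Cmul (Df K x) (Dg L x))) acc end)
          C0 terms.

(* F m = coefficient of alpha^m *)
Definition Series (N : nat) : Type := nat -> Fn N.
Definition emb {N : nat} (f : Fn N) : Series N :=
  fun m => match m with O => f | S _ => fun _ => C0 end.
Definition Szero {N : nat} : Series N := fun _ _ => C0.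
Definition Sadd {N : nat} (F G : Series N) : Series N := fun m x => Cadd (F m x) (G m x).
Definition Ssub {N : nat} (F G : Series N) : Series N := fun m x => Cadd (F m x) (Copp (G m x)).
Definition Sscale {N : nat} (c : C) (F : Series N) : Series N := fun m x => Cmul c (F m x).
Definition Ssum {N : nat} (Fs : list (Series N)) : Series N := fold_right Sadd Szero Fs.

(* Cs r = C_r  (Cs 0 is ignored; C_0(f,g) = f g) *)
Definition Cfull {N : nat} (Cs : nat -> Fn N -> Fn N -> Fn N) (r : nat) (f g : Fn N) : Fn N :=
  match r with O => fun x => Cmul (f x) (g x) | S _ => Cs r f g end.

Definition is_star_product {N : nat} (Cs : nat -> Fn N -> Fn N -> Fn N) : Prop :=
  forall r : nat, (1 <= r)%nat -> bidifferential (Cs r).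

(* C[[alpha]]-bilinear extension of f * g = fg + sum_{r>=1} (i alpha)^r C_r(f,g):
   coefficient of alpha^m is sum_{a+b+r=m} i^r C_r(F_a, G_b) *)
Definition star {N : nat} (Cs : nat -> Fn N -> Fn N -> Fn N) (F G : Series N) : Series N :=
  fun m x =>
    Csum_upto m (fun a =>
      Csum_upto (m - a) (fun b =>
        Cmul (Cpow Ci (m - a - b)) (Cfull Cs (m - a - b) (F a) (G b) x))).

Definition assoc {N : nat} (Cs : nat -> Fn N -> Fn N -> Fn N) (F G H : Series N) : Series N :=
  Ssub (star Cs F (star Cs G H)) (star Cs (star Cs F G) H).

Definition coord {N : nat} (i : Idx N) : Fn N := fun x => RtoC (x i).
Definition one {N : nat} : Fn N := fun _ => C1.
Definition monomial {N : nat} (l : list (Idx N)) : Fn N :=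
  fun x => RtoC (fold_right (fun i acc => x i * acc) 1 l).

Fixpoint ins {A : Type} (a : A) (l : list A) : list (list A) :=
  match l with
  | [] => [[a]]
  | b :: l' => (a :: b :: l') :: map (cons b) (ins a l')
  end.
(* all n! rearrangements [l_{s(1)}; ...; l_{s(n)}], s in S_n (with multiplicity) *)
Fixpoint perms {A : Type} (l : list A) : list (list A) :=
  match l with
  | [] => [[]]
  | a :: l' => flat_map (ins a) (perms l')
  end.

Definition iter_star {N : nat} (Cs : nat -> Fn N -> Fn N -> Fn N) (l : list (Idx N)) (F : Series N)
  : Series N :=
  fold_right (fun i acc => star Cs (emb (coord i)) acc) F l.

(* list of pairs (l_k, l with the k-th entry removed), k = 1..n *)
Fixpoint picks {A : Type} (l : list A) : list (A * list A) :=
  match l with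
  | [] => []
  | a :: l' => (a, l') :: map (fun p => (fst p, a :: snd p)) (picks l')
  end.

Definition weyl {N : nat} (Cs : nat -> Fn N -> Fn N -> Fn N) : Prop :=
  forall l : list (Idx N), (1 <= length l)%nat ->
  forall f : Fn N, smooth f ->
  forall (m : nat) (x : Pt N),
    star Cs (emb (monomial l)) (emb f) m x =
    Sscale (RtoC (/ INR (fact (length l))))
           (Ssum (map (fun s => iter_star Cs s (emb f)) (perms l))) m x.

Definition unity_stable {N : nat} (Cs : nat -> Fn N -> Fn N -> Fn N) : Prop :=
  forall f : Fn N, smooth f ->
  forall (m : nat) (x : Pt N),
    star Cs (emb f) (emb one) m x = emb f m x /\
    star Cs (emb one) (emb f) m x = emb f m x.

(* By the Weyl property, x^{i_k} * (prod_{l<>k} x^{i_l} * g) averages the iterated products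
   x^{i_k} * (x^{j_1} * ( ... * g)) over the (n-1)! orderings j of the remaining factors; summing over k
   runs through all n! orderings of the n factors once each, so that
   sum_k x^{i_k} * (prod_{l<>k} x^{i_l} * g) = n (prod_l x^{i_l}) * g.
   Taking g = 1 and using stability of unity gives sum_k x^{i_k} * prod_{l<>k} x^{i_l} = n prod_l x^{i_l},
   and then bilinearity of * makes the two halves of the summed associator both equal to
   n (prod_l x^{i_l}) * f. *)

From Stdlib Require Import Reals List Arith Lia.
From Stdlib Require Import Permutation FunctionalExtensionality ClassicalEpsilon ProofIrrelevance.
Import ListNotations.
Open Scope R_scope.

Ltac Cring := unfold Cadd, Cmul, Copp, C0, C1, RtoC; apply injective_projections; simpl; ring.

Ltac Sext := apply functional_extensionality; intro; apply functional_extensionality; intro.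

Lemma upd_id {N} (x : Pt N) (i : Idx N) : upd x i (x i) = x.
Proof.
  apply functional_extensionality; intro j; unfold upd.
  destruct (Nat.eq_dec (proj1_sig j) (proj1_sig i)) as [e|]; [|reflexivity].
  destruct i as [i Hi], j as [j Hj]; simpl in e; subst j.
  now rewrite (proof_irrelevance _ Hi Hj).
Qed.

Section Smoothness.

Context {N : nat}.

Lemma is_partial_ext (i : Idx N) (f g g' : Fn N) :
  is_partial i f g -> (forall x, g x = g' x) -> is_partial i f g'.
Proof. intros H E; replace g' with g; [exact H|]; now apply functional_extensionality. Qed.

Lemma is_partial_const (i : Idx N) (c : C) : is_partial i (fun _ => c) (fun _ => C0).
Proof. intro x; split; apply derivable_pt_lim_const. Qed.

Lemma is_partial_add (i : Idx N) (f g f' g' : Fn N) :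
  is_partial i f f' -> is_partial i g g' ->
  is_partial i (fun x => Cadd (f x) (g x)) (fun x => Cadd (f' x) (g' x)).
Proof.
  intros Hf Hg x; destruct (Hf x) as [Hf1 Hf2], (Hg x) as [Hg1 Hg2].
  split; now apply derivable_pt_lim_plus.
Qed.

Lemma is_partial_mul (i : Idx N) (f g f' g' : Fn N) :
  is_partial i f f' -> is_partial i g g' ->
  is_partial i (fun x => Cmul (f x) (g x))
               (fun x => Cadd (Cmul (f' x) (g x)) (Cmul (f x) (g' x))).
Proof.
  intros Hf Hg x; destruct (Hf x) as [Hf1 Hf2], (Hg x) as [Hg1 Hg2].
  assert (Hd := fun u v du dv (Hu : derivable_pt_lim u (x i) du) (Hv : derivable_pt_lim v (x i) dv) =>
                  derivable_pt_lim_mult u v (x i) du dv Hu Hv).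
  split.
  - replace (fst _) with (fst (f' x) * fst (g (upd x i (x i))) + fst (f (upd x i (x i))) * fst (g' x)
                          - (snd (f' x) * snd (g (upd x i (x i))) + snd (f (upd x i (x i))) * snd (g' x)))
      by (rewrite upd_id; simpl; ring).
    exact (derivable_pt_lim_minus _ _ _ _ _ (Hd _ _ _ _ Hf1 Hg1) (Hd _ _ _ _ Hf2 Hg2)).
  - replace (snd _) with (fst (f' x) * snd (g (upd x i (x i))) + fst (f (upd x i (x i))) * snd (g' x)
                          + (snd (f' x) * fst (g (upd x i (x i))) + snd (f (upd x i (x i))) * fst (g' x)))
      by (rewrite upd_id; simpl; ring).
    exact (derivable_pt_lim_plus _ _ _ _ _ (Hd _ _ _ _ Hf1 Hg2) (Hd _ _ _ _ Hf2 Hg1)).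
Qed.

(* The derivative family is built by choosing, through [constructive_indefinite_description],
   a partial derivative inside the class at each step of the list of directions. *)
Lemma smooth_of_partial_closed (Q : Fn N -> Prop) :
  (forall h, Q h -> forall i, exists g, is_partial i h g /\ Q g) ->
  forall h, Q h -> smooth h.
Proof.
  intros closed h Hh.
  assert (choose : forall h, Q h -> forall i : Idx N, {g | is_partial i h g /\ Q g})
    by (intros; now apply constructive_indefinite_description, closed).
  set (D := fix D (l : list (Idx N)) : {g | Q g} :=
    match l with
    | [] => exist _ h Hh
    | i :: l' => let g := choose _ (proj2_sig (D l')) i in
                 exist _ (proj1_sig g) (proj2 (proj2_sig g))
    end).
  exists (fun l => proj1_sig (D l)); split; [reflexivity|].
  intros l i; exact (proj1 (proj2_sig (choose _ (proj2_sig (D l)) i))).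
Qed.

Lemma smooth_deriv (f : Fn N) (D : list (Idx N) -> Fn N) :
  deriv_family f D -> forall K, smooth (D K).
Proof. intros [_ HD] K; exists (fun l => D (l ++ K)); split; [reflexivity|]; intros l i; apply HD. Qed.

Lemma smooth_partial (f : Fn N) :
  smooth f -> forall i, exists g, is_partial i f g /\ smooth g.
Proof.
  intros [D [HD0 HD]] i; exists (D [i]); split.
  - rewrite <- HD0; apply HD.
  - now apply (smooth_deriv f D).
Qed.

Lemma smooth_ext (h h' : Fn N) : (forall x, h x = h' x) -> smooth h' -> smooth h.
Proof. intros E H; replace h with h'; [exact H|]; symmetry; now apply functional_extensionality. Qed.

Lemma smooth_const (c : C) : smooth (fun _ : Pt N => c).
Proof.
  apply (smooth_of_partial_closed (fun h => exists c, h = fun _ => c)); [|eauto].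
  intros h [c' ->] i; exists (fun _ => C0); split; [apply is_partial_const | eauto].
Qed.

Lemma smooth_add (f g : Fn N) : smooth f -> smooth g -> smooth (fun x => Cadd (f x) (g x)).
Proof.
  intros [Df [Hf0 Hf]] [Dg [Hg0 Hg]].
  exists (fun l x => Cadd (Df l x) (Dg l x)); split.
  - now rewrite Hf0, Hg0.
  - intros l i; now apply is_partial_add.
Qed.

Definition sum_of_products (ps : list (Fn N * Fn N)) : Fn N :=
  fun x => fold_right (fun p acc => Cadd (Cmul (fst p x) (snd p x)) acc) C0 ps.

Definition smooth_pairs (ps : list (Fn N * Fn N)) : Prop :=
  forall p, In p ps -> smooth (fst p) /\ smooth (snd p).

(* Leibniz rule: the partial of sum u v is sum (u' v + u v'). *)
Lemma is_partial_sum_of_products (ps : list (Fn N * Fn N)) (i : Idx N) :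
  smooth_pairs ps ->
  exists ps', smooth_pairs ps' /\ is_partial i (sum_of_products ps) (sum_of_products ps').
Proof.
  induction ps as [|[u v] ps IH]; intros Hps.
  - exists []; split; [intros p []|]; apply is_partial_const.
  - destruct (Hps (u, v) (or_introl eq_refl)) as [Hu Hv].
    destruct (smooth_partial u Hu i) as [u' [Hu' Su']].
    destruct (smooth_partial v Hv i) as [v' [Hv' Sv']].
    destruct IH as [ps' [Sps' Hd]]; [intros p Hp; apply Hps; now right|].
    exists ((u', v) :: (u, v') :: ps'); split.
    + intros p [<-|[<-|Hp]]; simpl; auto.
    + eapply is_partial_ext; [exact (is_partial_add i _ _ _ _ (is_partial_mul i u v u' v' Hu' Hv') Hd)|].
      intro x; unfold sum_of_products; simpl; Cring.
Qed.

Lemma smooth_mul (f g : Fn N) : smooth f -> smooth g -> smooth (fun x => Cmul (f x) (g x)).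
Proof.
  intros Hf Hg.
  apply (smooth_of_partial_closed (fun h => exists ps, smooth_pairs ps /\ h = sum_of_products ps)).
  - intros h [ps [Hps ->]] i.
    destruct (is_partial_sum_of_products ps i Hps) as [ps' [Hps' Hd]]; eauto.
  - exists [(f, g)]; split; [intros p [<-|[]]; auto|].
    apply functional_extensionality; intro x; unfold sum_of_products; simpl; Cring.
Qed.

Lemma smooth_coord (i : Idx N) : smooth (coord i).
Proof.
  apply (smooth_of_partial_closed (fun h => (exists j, h = coord j) \/ exists c, h = fun _ => c));
    [|eauto].
  intros h [[j ->]|[c ->]] k.
  - exists (fun _ => if Nat.eq_dec (proj1_sig j) (proj1_sig k) then C1 else C0); split; [|eauto].
    intro x; unfold coord, RtoC, upd; simpl.
    destruct (Nat.eq_dec (proj1_sig j) (proj1_sig k)); split;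
      first [apply derivable_pt_lim_id | apply derivable_pt_lim_const].
  - exists (fun _ => C0); split; [apply is_partial_const | eauto].
Qed.

Lemma smooth_monomial (l : list (Idx N)) : smooth (monomial l).
Proof.
  induction l as [|i l IH]; [exact (smooth_const C1)|].
  apply (smooth_ext _ (fun x => Cmul (coord i x) (monomial l x))).
  - intro x; unfold monomial, coord; simpl; Cring.
  - apply smooth_mul; [apply smooth_coord | exact IH].
Qed.

End Smoothness.

Section Bidifferential.

Context {N : nat}.

Definition Clincomb (c1 : C) (u : C) (c2 : C) (v : C) : C := Cadd (Cmul c1 u) (Cmul c2 v).

Lemma fold_right_Clincomb {A} (F G H : A -> C -> C) (c1 c2 : C) (ts : list A) :
  (forall t a b, F t (Clincomb c1 a c2 b) = Clincomb c1 (G t a) c2 (H t b)) ->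
  fold_right F C0 ts = Clincomb c1 (fold_right G C0 ts) c2 (fold_right H C0 ts).
Proof.
  intro HF; induction ts as [|t ts IH]; simpl.
  - unfold Clincomb; Cring.
  - now rewrite IH, HF.
Qed.

Lemma deriv_family_lincomb (f1 f2 : Fn N) (D1 D2 : list (Idx N) -> Fn N) (c1 c2 : C) :
  deriv_family f1 D1 -> deriv_family f2 D2 ->
  deriv_family (fun x => Clincomb c1 (f1 x) c2 (f2 x)) (fun l x => Clincomb c1 (D1 l x) c2 (D2 l x)).
Proof.
  intros [H10 H1] [H20 H2]; split; [now rewrite H10, H20|].
  intros l i; unfold Clincomb; eapply is_partial_ext.
  - exact (is_partial_add i _ _ _ _ (is_partial_mul i _ _ _ _ (is_partial_const i c1) (H1 l i))
                                    (is_partial_mul i _ _ _ _ (is_partial_const i c2) (H2 l i))).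
  - intro x; Cring.
Qed.

Variable B : Fn N -> Fn N -> Fn N.
Hypothesis HB : bidifferential B.

Lemma bidifferential_lincomb_l (f1 f2 g : Fn N) (c1 c2 : C) :
  smooth f1 -> smooth f2 -> smooth g -> forall x,
  B (fun x => Clincomb c1 (f1 x) c2 (f2 x)) g x = Clincomb c1 (B f1 g x) c2 (B f2 g x).
Proof.
  destruct HB as [ts [_ HBts]]; intros [D1 H1] [D2 H2] [Dg Hg] x.
  rewrite (HBts _ _ _ _ (deriv_family_lincomb f1 f2 D1 D2 c1 c2 H1 H2) Hg x),
    (HBts _ _ _ _ H1 Hg x), (HBts _ _ _ _ H2 Hg x).
  apply fold_right_Clincomb; intros [[K L] c] a b; unfold Clincomb; Cring.
Qed.

Lemma bidifferential_lincomb_r (g f1 f2 : Fn N) (c1 c2 : C) :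
  smooth f1 -> smooth f2 -> smooth g -> forall x,
  B g (fun x => Clincomb c1 (f1 x) c2 (f2 x)) x = Clincomb c1 (B g f1 x) c2 (B g f2 x).
Proof.
  destruct HB as [ts [_ HBts]]; intros [D1 H1] [D2 H2] [Dg Hg] x.
  rewrite (HBts _ _ _ _ Hg (deriv_family_lincomb f1 f2 D1 D2 c1 c2 H1 H2) x),
    (HBts _ _ _ _ Hg H1 x), (HBts _ _ _ _ Hg H2 x).
  apply fold_right_Clincomb; intros [[K L] c] a b; unfold Clincomb; Cring.
Qed.

Lemma smooth_bidifferential (f g : Fn N) : smooth f -> smooth g -> smooth (B f g).
Proof.
  destruct HB as [ts [Hts HBts]]; intros [Df Hf] [Dg Hg].
  eapply smooth_ext; [intro x; exact (HBts f g Df Dg Hf Hg x)|].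
  clear HBts; induction ts as [|[[K L] c] ts IH]; simpl.
  - apply smooth_const.
  - apply smooth_add; [|apply IH; intros; apply Hts; now right].
    apply smooth_mul; [exact (Hts (K, L, c) (or_introl eq_refl))|].
    apply smooth_mul; eapply smooth_deriv; eauto.
Qed.

End Bidifferential.

Section FormalSeries.

Context {N : nat}.

Definition smooth_series (F : Series N) : Prop := forall m, smooth (F m).

Lemma smooth_series_emb (f : Fn N) : smooth f -> smooth_series (emb f).
Proof. intros Hf [|m]; [exact Hf | exact (smooth_const C0)]. Qed.

Lemma smooth_series_Szero : smooth_series (@Szero N).
Proof. intro m; exact (smooth_const C0). Qed.

Lemma smooth_series_Ssum {A} (h : A -> Series N) (L : list A) :
  (forall a, In a L -> smooth_series (h a)) -> smooth_series (Ssum (map h L)).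
Proof.
  induction L as [|a L IH]; intros H; [exact smooth_series_Szero|].
  intro m; apply smooth_add; [apply H; now left | apply IH; intros; apply H; now right].
Qed.

Lemma Ssum_app (L1 L2 : list (Series N)) : Ssum (L1 ++ L2) = Sadd (Ssum L1) (Ssum L2).
Proof.
  induction L1 as [|a L IH]; simpl.
  - Sext; unfold Sadd, Szero; Cring.
  - unfold Ssum in *; simpl; rewrite IH; Sext; unfold Sadd; Cring.
Qed.

Lemma Ssum_Permutation (L1 L2 : list (Series N)) : Permutation L1 L2 -> Ssum L1 = Ssum L2.
Proof.
  induction 1; unfold Ssum in *; simpl; try congruence.
  Sext; unfold Sadd; Cring.
Qed.

Lemma Ssum_flat_map {A B} (g : B -> Series N) (h : A -> list B) (L : list A) :
  Ssum (map g (flat_map h L)) = Ssum (map (fun a => Ssum (map g (h a))) L).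
Proof. induction L as [|a L IH]; simpl; [reflexivity|]; now rewrite map_app, Ssum_app, IH. Qed.

Lemma Ssum_map_Sscale {A} (c : C) (h : A -> Series N) (L : list A) :
  Ssum (map (fun a => Sscale c (h a)) L) = Sscale c (Ssum (map h L)).
Proof.
  induction L as [|a L IH]; simpl.
  - Sext; unfold Sscale, Szero; Cring.
  - unfold Ssum in *; simpl; rewrite IH; Sext; unfold Sadd, Sscale; Cring.
Qed.

Lemma Ssum_map_Ssub {A} (h1 h2 : A -> Series N) (L : list A) :
  Ssum (map (fun a => Ssub (h1 a) (h2 a)) L) = Ssub (Ssum (map h1 L)) (Ssum (map h2 L)).
Proof.
  induction L as [|a L IH]; simpl.
  - Sext; unfold Ssub, Szero; Cring.
  - unfold Ssum in *; simpl; rewrite IH; Sext; unfold Sadd, Ssub; Cring.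
Qed.

Lemma Sscale_Sscale (c d : C) (F : Series N) : Sscale c (Sscale d F) = Sscale (Cmul c d) F.
Proof. Sext; unfold Sscale; Cring. Qed.

End FormalSeries.

Section StarBilinear.

Context {N : nat}.
Variable Cs : nat -> Fn N -> Fn N -> Fn N.
Hypothesis HS : is_star_product Cs.

Definition Slincomb (c1 : C) (F : Series N) (c2 : C) (G : Series N) : Series N :=
  fun m x => Clincomb c1 (F m x) c2 (G m x).

Lemma Csum_upto_lincomb (n : nat) (w u v : nat -> C) (c1 c2 : C) :
  (forall k, w k = Clincomb c1 (u k) c2 (v k)) ->
  Csum_upto n w = Clincomb c1 (Csum_upto n u) c2 (Csum_upto n v).
Proof. intro H; induction n; simpl; [apply H|]; rewrite IHn, H; unfold Clincomb; Cring. Qed.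

Lemma star_lincomb_l (F1 F2 G : Series N) (c1 c2 : C) :
  smooth_series F1 -> smooth_series F2 -> smooth_series G ->
  star Cs (Slincomb c1 F1 c2 F2) G = Slincomb c1 (star Cs F1 G) c2 (star Cs F2 G).
Proof.
  intros H1 H2 HG; Sext; unfold star, Slincomb.
  apply Csum_upto_lincomb; intro a; apply Csum_upto_lincomb; intro b.
  destruct (_ - _ - _)%nat as [|r]; simpl.
  - unfold Clincomb; Cring.
  - rewrite (bidifferential_lincomb_l _ (HS (S r) ltac:(lia))); auto; unfold Clincomb; Cring.
Qed.

Lemma star_lincomb_r (F G1 G2 : Series N) (c1 c2 : C) :
  smooth_series F -> smooth_series G1 -> smooth_series G2 ->
  star Cs F (Slincomb c1 G1 c2 G2) = Slincomb c1 (star Cs F G1) c2 (star Cs F G2).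
Proof.
  intros HF H1 H2; Sext; unfold star, Slincomb.
  apply Csum_upto_lincomb; intro a; apply Csum_upto_lincomb; intro b.
  destruct (_ - _ - _)%nat as [|r]; simpl.
  - unfold Clincomb; Cring.
  - rewrite (bidifferential_lincomb_r _ (HS (S r) ltac:(lia))); auto; unfold Clincomb; Cring.
Qed.

Lemma smooth_series_star (F G : Series N) :
  smooth_series F -> smooth_series G -> smooth_series (star Cs F G).
Proof.
  intros HF HG m; unfold star.
  assert (Hsum : forall n (h : nat -> Fn N), (forall k, smooth (h k)) ->
                   smooth (fun x => Csum_upto n (fun k => h k x)))
    by (intros n h Hh; induction n; simpl; [apply Hh | now apply smooth_add]).
  apply (Hsum _ (fun a x => Csum_upto _ _)); intro a.
  apply (Hsum _ (fun b x => Cmul _ (Cfull Cs _ (F a) (G b) x))); intro b.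
  apply smooth_mul; [apply smooth_const|].
  destruct (m - a - b)%nat as [|r]; simpl.
  - now apply smooth_mul.
  - now apply (smooth_bidifferential _ (HS (S r) ltac:(lia))).
Qed.

Lemma smooth_series_iter_star (s : list (Idx N)) (F : Series N) :
  smooth_series F -> smooth_series (iter_star Cs s F).
Proof.
  intro HF; induction s as [|i s IH]; [exact HF|].
  apply smooth_series_star; [apply smooth_series_emb, smooth_coord | exact IH].
Qed.

Lemma Sscale_as_Slincomb (c : C) (F : Series N) : Sscale c F = Slincomb c F C0 F.
Proof. Sext; unfold Sscale, Slincomb, Clincomb; Cring. Qed.

Lemma Sadd_as_Slincomb (F G : Series N) : Sadd F G = Slincomb C1 F C1 G.
Proof. Sext; unfold Sadd, Slincomb, Clincomb; Cring. Qed.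

Lemma Szero_as_Slincomb : @Szero N = Slincomb C0 Szero C0 Szero.
Proof. Sext; unfold Szero, Slincomb, Clincomb; Cring. Qed.

Lemma star_Sscale_l (c : C) (F G : Series N) :
  smooth_series F -> smooth_series G -> star Cs (Sscale c F) G = Sscale c (star Cs F G).
Proof. intros; rewrite !Sscale_as_Slincomb; now apply star_lincomb_l. Qed.

Lemma star_Sscale_r (c : C) (F G : Series N) :
  smooth_series F -> smooth_series G -> star Cs F (Sscale c G) = Sscale c (star Cs F G).
Proof. intros; rewrite !Sscale_as_Slincomb; now apply star_lincomb_r. Qed.

Lemma star_Ssum_l {A} (h : A -> Series N) (L : list A) (G : Series N) :
  (forall a, In a L -> smooth_series (h a)) -> smooth_series G ->
  star Cs (Ssum (map h L)) G = Ssum (map (fun a => star Cs (h a) G) L).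
Proof.
  intros Hh HG; induction L as [|a L IH]; simpl.
  - rewrite Szero_as_Slincomb, star_lincomb_l by (exact smooth_series_Szero || exact HG).
    Sext; unfold Szero, Slincomb, Clincomb; Cring.
  - rewrite Sadd_as_Slincomb, star_lincomb_l, IH, <- Sadd_as_Slincomb; auto.
    + intros; apply Hh; now right.
    + apply Hh; now left.
    + apply smooth_series_Ssum; intros; apply Hh; now right.
Qed.

Lemma star_Ssum_r {A} (h : A -> Series N) (L : list A) (F : Series N) :
  (forall a, In a L -> smooth_series (h a)) -> smooth_series F ->
  star Cs F (Ssum (map h L)) = Ssum (map (fun a => star Cs F (h a)) L).
Proof.
  intros Hh HF; induction L as [|a L IH]; simpl.
  - rewrite Szero_as_Slincomb, star_lincomb_r by (exact smooth_series_Szero || exact HF).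
    Sext; unfold Szero, Slincomb, Clincomb; Cring.
  - rewrite Sadd_as_Slincomb, star_lincomb_r, IH, <- Sadd_as_Slincomb; auto.
    + intros; apply Hh; now right.
    + apply Hh; now left.
    + apply smooth_series_Ssum; intros; apply Hh; now right.
Qed.

End StarBilinear.

Lemma Permutation_flat_map_app {A B} (F G : A -> list B) (L : list A) :
  Permutation (flat_map (fun a => F a ++ G a) L) (flat_map F L ++ flat_map G L).
Proof.
  induction L as [|a L IH]; simpl; [reflexivity|].
  rewrite IH, <- !app_assoc; apply Permutation_app_head, Permutation_app_swap_app.
Qed.

Lemma Permutation_flat_map_pointwise {A B} (F G : A -> list B) (L : list A) :
  (forall a, Permutation (F a) (G a)) -> Permutation (flat_map F L) (flat_map G L).
Proof. intro H; induction L; simpl; [reflexivity|]; now apply Permutation_app. Qed.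

Lemma flat_map_flat_map {A B D} (f : B -> list D) (g : A -> list B) (L : list A) :
  flat_map f (flat_map g L) = flat_map (fun a => flat_map f (g a)) L.
Proof. induction L; simpl; [reflexivity|]; rewrite flat_map_app; congruence. Qed.

Lemma flat_map_map {A B D} (f : B -> list D) (g : A -> B) (L : list A) :
  flat_map f (map g L) = flat_map (fun a => f (g a)) L.
Proof. induction L; simpl; congruence. Qed.

Lemma map_flat_map {A B D} (f : B -> D) (g : A -> list B) (L : list A) :
  map f (flat_map g L) = flat_map (fun a => map f (g a)) L.
Proof. induction L; simpl; [reflexivity|]; rewrite map_app; congruence. Qed.

Lemma flat_map_singleton {A B} (u : A -> B) (L : list A) : flat_map (fun a => [u a]) L = map u L.
Proof. induction L; simpl; congruence. Qed.

Lemma perms_picks {A} (l : list A) : l <> [] ->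
  Permutation (perms l) (flat_map (fun p => map (cons (fst p)) (perms (snd p))) (picks l)).
Proof.
  induction l as [|a l IH]; intro Hne; [congruence|].
  destruct l as [|b l0]; [reflexivity|].
  specialize (IH ltac:(discriminate)).
  remember (b :: l0) as l eqn:El; simpl.
  set (X := fun p : A * list A => flat_map (fun s => [a :: fst p :: s]) (perms (snd p))).
  set (Y := fun p : A * list A => flat_map (fun s => map (cons (fst p)) (ins a s)) (perms (snd p))).
  transitivity (flat_map X (picks l) ++ flat_map Y (picks l)).
  - rewrite IH, flat_map_flat_map, <- Permutation_flat_map_app.
    apply Permutation_flat_map_pointwise; intro p.
    unfold X, Y; rewrite flat_map_map, <- Permutation_flat_map_app; reflexivity.
  - rewrite flat_map_map; simpl; apply Permutation_app.
    + rewrite IH, map_flat_map; apply Permutation_flat_map_pointwise; intro p.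
      unfold X; now rewrite flat_map_singleton, map_map.
    + apply Permutation_flat_map_pointwise; intro p.
      unfold Y; simpl; now rewrite map_flat_map.
Qed.

Lemma length_picks {A} (l : list A) (p : A * list A) :
  In p (picks l) -> S (length (snd p)) = length l.
Proof.
  revert p; induction l as [|a l IH]; simpl; intros p Hp; [contradiction|].
  destruct Hp as [<-|Hp]; [reflexivity|].
  apply in_map_iff in Hp; destruct Hp as [q [<- Hq]]; simpl; now rewrite (IH q Hq).
Qed.

Section WeylStarProduct.

Context {N : nat}.
Variable Cs : nat -> Fn N -> Fn N -> Fn N.
Hypothesis HS : is_star_product Cs.
Hypothesis Hweyl : weyl Cs.

Lemma weyl_series (l : list (Idx N)) (g : Fn N) :
  (1 <= length l)%nat -> smooth g ->
  star Cs (emb (monomial l)) (emb g) =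
  Sscale (RtoC (/ INR (fact (length l)))) (Ssum (map (fun s => iter_star Cs s (emb g)) (perms l))).
Proof. intros Hl Hg; Sext; now apply Hweyl. Qed.

Lemma sum_picks_coord_star_monomial (l : list (Idx N)) (g : Fn N) :
  (2 <= length l)%nat -> smooth g ->
  Ssum (map (fun p => star Cs (emb (coord (fst p))) (star Cs (emb (monomial (snd p))) (emb g)))
            (picks l))
  = Sscale (RtoC (INR (length l))) (star Cs (emb (monomial l)) (emb g)).
Proof.
  intros Hl Hg.
  set (I := fun s => iter_star Cs s (emb g)).
  set (c := RtoC (/ INR (fact (length l - 1)))).
  assert (HI : forall s, smooth_series (iter_star Cs s (emb g)))
    by (intro s; apply smooth_series_iter_star, smooth_series_emb; auto).
  assert (Hx : forall i, smooth_series (emb (coord (N:=N) i)))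
    by (intro i; apply smooth_series_emb, smooth_coord).
  rewrite (map_ext_in _ (fun p => Sscale c (Ssum (map (fun s => I (fst p :: s)) (perms (snd p)))))).
  2:{ intros p Hp; pose proof (length_picks l p Hp) as Hp'.
      rewrite weyl_series, star_Sscale_r, star_Ssum_r by
        (lia || auto || (apply smooth_series_Ssum; intros; apply HI)).
      unfold c; now replace (length l - 1)%nat with (length (snd p)) by lia. }
  rewrite Ssum_map_Sscale.
  assert (Hperm : Ssum (map (fun p => Ssum (map (fun s => I (fst p :: s)) (perms (snd p)))) (picks l))
                  = Ssum (map I (perms l))).
  { rewrite (Ssum_Permutation _ _ (Permutation_map I (perms_picks l
               ltac:(destruct l; simpl in *; [lia|discriminate])))).
    rewrite Ssum_flat_map; f_equal; apply map_ext; intro p; now rewrite map_map. }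
  rewrite Hperm, (weyl_series l g) by (auto || lia); fold I.
  rewrite Sscale_Sscale; f_equal; unfold c.
  destruct (length l) as [|n]; [lia|].
  rewrite fact_simpl, mult_INR, Nat.sub_succ, Nat.sub_0_r.
  pose proof (INR_fact_neq_0 n); assert (INR (S n) <> 0) by (apply not_0_INR; lia).
  unfold Cmul, RtoC; simpl; f_equal; field; auto.
Qed.

Hypothesis Hunit : unity_stable Cs.

Lemma star_emb_one_r (g : Fn N) : smooth g -> star Cs (emb g) (emb one) = emb g.
Proof. intro Hg; Sext; now apply Hunit. Qed.

Lemma sum_picks_coord_star_monomial_one (l : list (Idx N)) :
  (2 <= length l)%nat ->
  Ssum (map (fun p => star Cs (emb (coord (fst p))) (emb (monomial (snd p)))) (picks l))
  = Sscale (RtoC (INR (length l))) (emb (monomial l)).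
Proof.
  intro Hl.
  rewrite <- star_emb_one_r, <- sum_picks_coord_star_monomial by
    (exact (smooth_monomial l) || exact (smooth_const C1) || exact Hl).
  f_equal; apply map_ext; intro p; now rewrite star_emb_one_r by apply smooth_monomial.
Qed.

End WeylStarProduct.

Theorem proposition2 (N : nat) (Cs : nat -> Fn N -> Fn N -> Fn N)
  (Hstar : is_star_product Cs) (Hweyl : weyl Cs) (Hunit : unity_stable Cs)
  (l : list (Idx N)) (Hn : (2 <= length l)%nat)
  (f : Fn N) (Hf : smooth f) :
  forall (m : nat) (x : Pt N),
    Ssum (map (fun p => assoc Cs (emb (coord (fst p))) (emb (monomial (snd p))) (emb f))
              (picks l)) m x = C0.
Proof.
  set (coord_star_rest := fun p : Idx N * list (Idx N) =>
                          star Cs (emb (coord (fst p))) (emb (monomial (snd p)))).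
  enough (E : Ssum (map (fun p => assoc Cs (emb (coord (fst p))) (emb (monomial (snd p))) (emb f))
                        (picks l)) = Szero) by (intros m x; now rewrite E).
  unfold assoc; rewrite Ssum_map_Ssub, sum_picks_coord_star_monomial by assumption.
  rewrite <- (star_Ssum_l Cs Hstar coord_star_rest).
  2:{ intros p _; apply smooth_series_star; auto using smooth_series_emb, smooth_coord, smooth_monomial. }
  2:{ now apply smooth_series_emb. }
  unfold coord_star_rest; rewrite sum_picks_coord_star_monomial_one, star_Sscale_l
    by (assumption || apply smooth_series_emb; auto using smooth_monomial).
  Sext; unfold Ssub, Szero; Cring.
Qed.
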